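(* Let $G$ be a flattened grammar and $\mathrm{CPS}(G)$ its CPS transformation (with respect to an arbitrary fixed choice of CPS-triggering nonterminals). Then: (1) For every symbol $X$ of $G$ and every terminal string $\lambda\in\Sigma^*$, if $X\Rightarrow^*\lambda$ in $G$ in $n$ steps, then $\hat X\Rightarrow^*\lambda\,\tau_X$ in $\mathrm{CPS}(G)$ in $n$ steps. (2) For every dotted production $\Pi = X\to\alpha_1\cdots\alpha_{i-1}\cdot\alpha_i\cdots\alpha_r$ of $G$ and every $\lambda\in\Sigma^*$, if $\alpha_i\cdots\alpha_r\Rightarrow^*\lambda$ in $G$ in $n$ steps, then $\tau_\Pi\Rightarrow^*\lambda\,\tau_X$ in $\mathrm{CPS}(G)$ in $n$ steps.
   Context: BNF grammars and flattening. A BNF grammar over terminals $\Sigma$ is a list of rules $X\to e$, where $X$ is a nonterminal (called top-level) and $e$ is an expression: a single symbol; a concatenation $e_1\cdots e_n$ ($n\ge 0$, the case $n=0$ being $\varepsilon$); an alternation $e_1\mid\cdots\mid e_n$; an optional $e_1?$; or a repetition $e_1^*$. The procedure $\mathrm{Flatten}(X,e)$ emits context-free productions: (i) if $e=\alpha$ is a single symbol, emit $X\to\alpha$; (ii) if $e=e_1\cdots e_n$, for each $i$ let $\alpha_i=e_i$ if $e_i$ is a single symbol, and otherwise let $\alpha_i$ be a fresh nonterminal and call $\mathrm{Flatten}(\alpha_i,e_i)$; emit $X\to\alpha_1\cdots\alpha_n$; (iii) if $e=e_1\mid\cdots\mid e_n$, call $\mathrm{Flatten}(X,e_i)$ for each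 $i$; (iv) if $e=e_1?$, call $\mathrm{Flatten}(X,e_1\mid\varepsilon)$; (v) if $e=e_1^*$, let $\alpha$ be fresh, call $\mathrm{Flatten}(\alpha,e_1)$ and emit $X\to\alpha X$ and $X\to\varepsilon$. The flattened grammar $G$ consists of all productions emitted by $\mathrm{Flatten}(X,e)$ over all rules $X\to e$; its start symbol $S$ is a top-level nonterminal. CPS transformation. A nonterminal is CPS-eligible if it was created as a fresh symbol during flattening. Fix an arbitrary subset of the CPS-eligible nonterminals, called CPS-triggering (terminals and top-level nonterminals are never CPS-triggering). For every nonterminal $Y$ let $\hat Y$ be a new symbol; for a terminal $\sigma$ set $\hat\sigma=\sigma$. Define mutually recursive procedures. $\mathrm{CPSProd}(X\to\alpha_1\cdots\alpha_i\cdot\alpha_{i+1}\cdots\alpha_r,\ \tau)$, where $\tau$ is a string of symbols: if $i=0$, add the production $\hat X\to\tau$ to $\mathrm{CPS}(G)$; if $i>0$ and $\alpha_i$ is not CPS-triggering, call $\mathrm{CPSProd}(X\to\alpha_1\cdots\alpha_{i-1}\cdot\alpha_i\cdots\alpha_r,\ \hat\alpha_i\tau)$; if $i>0$, $\alpha_i$ is CPS-triggering, $i=r$ and $X=\alpha_r$ (i.e. the dotted production has the form $\alpha\to\gamma\alpha\,\cdot$), call $\mathrm{CPSProd}(X\to\alpha_1\cdots\alpha_{r-1}\cdot\alpha_r,\ \hat\alpha_r)$; otherwise ($\alpha_i$ CPS-triggering, not of that form) call $\mathrm{CPSSym}(\alpha_i,\tau)$ and then $\mathrm{CPSProd}(X\to\alpha_1\cdots\alpha_{i-1}\cdot\alpha_i\cdots\alpha_r,\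 \hat\alpha_i)$. $\mathrm{CPSSym}(X,\tau)$: for each production $X\to\eta$ of $G$, call $\mathrm{CPSProd}(X\to\eta\,\cdot,\ \tau)$. The grammar $\mathrm{CPS}(G)$ consists of all productions added when $\mathrm{CPSSym}(X,\varepsilon)$ is called for every non-CPS-triggering nonterminal $X$; its start symbol is $\hat S$. Tail contexts. During this transformation $\mathrm{CPSSym}(X,\cdot)$ is invoked exactly once for each nonterminal $X$, and $\mathrm{CPSProd}(\Pi,\cdot)$ exactly once for each dotted production $\Pi$ of $G$. For a nonterminal $X$, $\tau_X$ denotes the second argument of that invocation of $\mathrm{CPSSym}(X,\cdot)$; for a terminal $X$, $\tau_X=\varepsilon$. For a dotted production $\Pi$, $\tau_\Pi$ is the second argument of the invocation $\mathrm{CPSProd}(\Pi,\cdot)$. ''$A\Rightarrow^* w$ in $n$ steps'' means there is a derivation from $A$ to $w$ using exactly $n$ production applications. *)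

From Stdlib Require Import List.
Import ListNotations.
Set Implicit Arguments.

Inductive sym (T N : Type) : Type :=
| Term (t : T)
| NT (A : N).
Arguments Term {T N} t.
Arguments NT {T N} A.

Inductive step {T N : Type} (P : N -> list (sym T N) -> Prop)
  : list (sym T N) -> list (sym T N) -> Prop :=
| Step (u v : list (sym T N)) (A : N) (beta : list (sym T N)) :
    P A beta -> step P (u ++ NT A :: v) (u ++ beta ++ v).

Inductive derivesn {T N : Type} (P : N -> list (sym T N) -> Prop)
  : nat -> list (sym T N) -> list (sym T N) -> Prop :=
| derives0 (w : list (sym T N)) : derivesn P 0 w w
| derivesS (n : nat) (u v w : list (sym T N)) :
    step P u v -> derivesn P n v w -> derivesn P (S n) u w.

Definition prods_of {T N : Type} (G : list (N * list (sym T N)))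
  : N -> list (sym T N) -> Prop := fun A beta => In (A, beta) G.

(* BNF expressions: symbol, concatenation (n >= 0; n = 0 is epsilon),
   alternation, optional, repetition. *)
Inductive expr (T N : Type) : Type :=
| ESym (s : sym T N)
| ECat (es : list (expr T N))
| EAlt (es : list (expr T N))
| EOpt (e : expr T N)
| EStar (e : expr T N).
Arguments ESym {T N} s.
Arguments ECat {T N} es.
Arguments EAlt {T N} es.
Arguments EOpt {T N} e.
Arguments EStar {T N} e.

(* Nonterminals of the flattened grammar: top-level ones, and fresh ones
   created during flattening (numbered by a global counter). *)
Inductive fnt (N : Type) : Type :=
| Top (x : N)
| Fresh (k : nat).
Arguments Top {N} x.
Arguments Fresh {N} k.

Section Flatten.
Variables (T N : Type).

Definition fsym := sym T (fnt N).
Definition fprod := (fnt N * list fsym)%type.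

Definition liftS (s : sym T N) : fsym :=
  match s with Term t => Term t | NT x => NT (Top x) end.

(* flatten X e k = (productions emitted by Flatten(X,e), next fresh index),
   fresh nonterminals being Fresh k, Fresh (k+1), ... *)
Fixpoint flatten (X : fnt N) (e : expr T N) (k : nat) {struct e}
  : list fprod * nat :=
  match e with
  | ESym s => ([(X, [liftS s])], k)
  | ECat es =>
      let fix go (es : list (expr T N)) (k : nat)
          : list fsym * list fprod * nat :=
        match es with
        | [] => ([], [], k)
        | e1 :: es' =>
            match e1 with
            | ESym s =>
                let '(al, ps, k') := go es' k in (liftS s :: al, ps, k')
            | _ =>
                let '(ps1, k1) := flatten (Fresh k) e1 (S k) in
                let '(al, ps, k') := go es' k1 in
                (NT (Fresh k) :: al, ps1 ++ ps, k')
            end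
        end in
      let '(al, ps, k') := go es k in (ps ++ [(X, al)], k')
  | EAlt es =>
      let fix go (es : list (expr T N)) (k : nat) : list fprod * nat :=
        match es with
        | [] => ([], k)
        | e1 :: es' =>
            let '(ps1, k1) := flatten X e1 k in
            let '(ps, k') := go es' k1 in (ps1 ++ ps, k')
        end in
      go es k
  | EOpt e1 =>
      (* Flatten(X, e1 | eps) = Flatten(X, e1) followed by Flatten(X, eps),
         the latter emitting X -> eps (written out to keep recursion structural) *)
      let '(ps, k') := flatten X e1 k in (ps ++ [(X, [])], k')
  | EStar e1 =>
      let '(ps, k') := flatten (Fresh k) e1 (S k) in
      (ps ++ [(X, [NT (Fresh k); NT X]); (X, [])], k')
  end.

Fixpoint flatten_rules (rs : list (N * expr T N)) (k : nat) : list fprod :=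
  match rs with
  | [] => []
  | (x, e) :: rs' =>
      let '(ps, k') := flatten (Top x) e k in ps ++ flatten_rules rs' k'
  end.

Definition flatG (rs : list (N * expr T N)) : list fprod := flatten_rules rs 0.

Definition nt_of (G : list fprod) (X : fnt N) : Prop :=
  exists p, In p G /\ (fst p = X \/ In (NT X) (snd p)).
Definition sym_of (G : list fprod) (s : fsym) : Prop :=
  exists p, In p G /\ (s = NT (fst p) \/ In s (snd p)).

Inductive hatnt : Type := Hat (X : fnt N).
Definition hsym := sym T hatnt.
Definition hat (s : fsym) : hsym :=
  match s with Term t => Term t | NT X => NT (Hat X) end.

Variable G : list fprod.
(* trig k : the fresh (CPS-eligible) nonterminal Fresh k is CPS-triggering;
   top-level nonterminals and terminals are never triggering. *)
Variable trig : nat -> bool.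

Definition isTrig (s : fsym) : bool :=
  match s with NT (Fresh k) => trig k | _ => false end.

(* The invocations performed by the CPS transformation:
   SymCall X tau       : CPSSym(X, tau) is invoked;
   ProdCall X eta j tau: CPSProd(X -> a_1..a_j . a_(j+1)..a_r, tau) is invoked,
                         where eta = a_1..a_r. *)
Inductive SymCall : fnt N -> list hsym -> Prop :=
| sc_init (X : fnt N) :
    nt_of G X -> isTrig (NT X) = false -> SymCall X []
| sc_call (X Y : fnt N) (eta : list fsym) (j : nat) (tau : list hsym) :
    ProdCall X eta (S j) tau ->
    nth_error eta j = Some (NT Y) -> isTrig (NT Y) = true ->
    ~ (S j = length eta /\ Y = X) ->
    SymCall Y tau
with ProdCall : fnt N -> list fsym -> nat -> list hsym -> Prop :=
| pc_start (X : fnt N) (eta : list fsym) (tau : list hsym) :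
    SymCall X tau -> In (X, eta) G -> ProdCall X eta (length eta) tau
| pc_nontrig (X : fnt N) (eta : list fsym) (j : nat) (tau : list hsym) (a : fsym) :
    ProdCall X eta (S j) tau ->
    nth_error eta j = Some a -> isTrig a = false ->
    ProdCall X eta j (hat a :: tau)
| pc_loop (X : fnt N) (eta : list fsym) (j : nat) (tau : list hsym) :
    ProdCall X eta (S j) tau ->
    nth_error eta j = Some (NT X) -> isTrig (NT X) = true ->
    S j = length eta ->
    ProdCall X eta j [hat (NT X)]
| pc_trig (X Y : fnt N) (eta : list fsym) (j : nat) (tau : list hsym) :
    ProdCall X eta (S j) tau ->
    nth_error eta j = Some (NT Y) -> isTrig (NT Y) = true ->
    ~ (S j = length eta /\ Y = X) ->
    ProdCall X eta j [hat (NT Y)].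

(* CPS(G): the production X^ -> tau is added when CPSProd is invoked
   with the dot at the start (i = 0). *)
Definition cpsG : hatnt -> list hsym -> Prop :=
  fun H tau => match H with Hat X => exists eta, ProdCall X eta 0 tau end.

(* tau_X: for a nonterminal, the argument of CPSSym(X, .); for a terminal, eps. *)
Definition TauX (s : fsym) (tau : list hsym) : Prop :=
  match s with Term _ => tau = [] | NT X => SymCall X tau end.

End Flatten.

(* Read τ_Y as the continuation of Y: Ŷ derives what Y derives, followed by τ_Y.
   For a dotted production Π, τ_Π is the hatted part of the suffix after the dot
   up to and including its first triggering symbol Z; the rest of the suffix is
   accounted for by τ_Z, which is τ of the same production with the dot moved past
   Z (for the tail X of a repetition rule X → αX nothing remains, and τ_X serves).
   So both claims hold by a simultaneous induction on n, claim (2) by descending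
   induction on the dot position, each step of G being matched by one step of
   CPS(G).

   This needs τ_Z to be well defined, i.e. CPSSym(Z, ·) to be invoked with a
   single argument.  It is, because in a flattened grammar every fresh
   nonterminal has at most one call site: one occurrence in a production body
   other than as the tail of its own repetition rule. *)

From Stdlib Require Import List Arith Lia Classical.
Import ListNotations.

Lemma skipn_nth_error {A : Type} (l : list A) j a :
  nth_error l j = Some a -> skipn j l = a :: skipn (S j) l.
Proof.
  revert l. induction j as [|j IH]; intros [|x l] H; try discriminate.
  - now injection H as ->.
  - exact (IH l H).
Qed.

Lemma nth_error_lt {A : Type} (l : list A) j a : nth_error l j = Some a -> j < length l.
Proof. intros H. apply nth_error_Some. congruence. Qed.

Section Derivations.
Context {T N : Type} (P : N -> list (sym T N) -> Prop).

Lemma step_app_r u w v : step P u w -> step P (u ++ v) (w ++ v).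
Proof. destruct 1. rewrite <- !app_assoc. constructor; assumption. Qed.

Lemma step_app_l u w v : step P u w -> step P (v ++ u) (v ++ w).
Proof.
  destruct 1 as [u u' A beta HP].
  rewrite (app_assoc v u (NT A :: u')), (app_assoc v u (beta ++ u')).
  constructor; assumption.
Qed.

Lemma derivesn_app_r n u w v : derivesn P n u w -> derivesn P n (u ++ v) (w ++ v).
Proof. induction 1; econstructor; eauto using step_app_r. Qed.

Lemma derivesn_app_l n u w v : derivesn P n u w -> derivesn P n (v ++ u) (v ++ w).
Proof. induction 1; econstructor; eauto using step_app_l. Qed.

Lemma derivesn_trans n m u v w :
  derivesn P n u v -> derivesn P m v w -> derivesn P (n + m) u w.
Proof. induction 1; intros; simpl; [assumption | econstructor; eauto]. Qed.

Lemma derivesn_seq n m u x v w :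
  derivesn P n u (x ++ v) -> derivesn P m v w -> derivesn P (n + m) u (x ++ w).
Proof. intros Du Dv. eapply derivesn_trans; [exact Du | apply derivesn_app_l, Dv]. Qed.

Lemma derivesn_NT n A beta w :
  P A beta -> derivesn P n beta w -> derivesn P (S n) [NT A] w.
Proof.
  intros HP D. econstructor; [|exact D].
  rewrite <- (app_nil_l [NT A]), <- (app_nil_r beta), <- (app_nil_l (beta ++ [])).
  constructor; exact HP.
Qed.

Lemma derivesn_terminals n l w :
  derivesn P n (map Term l) w -> n = 0 /\ w = map Term l.
Proof.
  inversion 1 as [|n' u v w' Hstep]; subst; [auto|].
  inversion Hstep as [u' v' A beta _ E].
  symmetry in E; apply map_eq_app in E as (l1 & l2 & _ & _ & E).
  destruct l2; discriminate.
Qed.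

Lemma derivesn_nil_inv n (lam : list T) :
  derivesn P n [] (map Term lam) -> n = 0 /\ lam = [].
Proof.
  intros D. apply (derivesn_terminals n []) in D as [-> E].
  simpl in E. split; [reflexivity|]. now apply map_eq_nil in E.
Qed.

Lemma derivesn_NT_inv n A (lam : list T) :
  derivesn P n [NT A] (map Term lam) ->
  exists n' beta, n = S n' /\ P A beta /\ derivesn P n' beta (map Term lam).
Proof.
  inversion 1 as [w E|n' u v w Hstep D]; subst.
  - destruct lam as [|? []]; discriminate.
  - inversion Hstep as [p s A' beta HP E]; subst.
    destruct p as [|? []]; try discriminate.
    injection E as -> ->. rewrite app_nil_r in D. eauto.
Qed.

Lemma step_app_inv u v x : step P (u ++ v) x ->
  exists u' v', x = u' ++ v' /\ (step P u u' /\ v' = v \/ u' = u /\ step P v v').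
Proof.
  inversion 1 as [p s A beta HP E]; subst. symmetry in E.
  apply app_eq_app in E as (l & [[-> E] | [-> ->]]).
  - destruct l as [|y l]; simpl in E.
    + subst v. exists p, (beta ++ s). rewrite app_nil_r.
      split; [reflexivity|]. right. split; [reflexivity|].
      rewrite <- (app_nil_l (NT A :: s)), <- (app_nil_l (beta ++ s)).
      constructor; exact HP.
    + injection E as <- ->. exists (p ++ beta ++ l), v.
      split; [now rewrite <- !app_assoc|]. left. split; [constructor|]; auto.
  - exists u, (l ++ beta ++ s). split; [now rewrite <- !app_assoc|].
    right. split; [reflexivity|constructor; exact HP].
Qed.

Lemma derivesn_app_inv n u v (lam : list T) :
  derivesn P n (u ++ v) (map Term lam) ->
  exists n1 n2 l1 l2, n = n1 + n2 /\ lam = l1 ++ l2 /\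
    derivesn P n1 u (map Term l1) /\ derivesn P n2 v (map Term l2).
Proof.
  revert u v lam. induction n as [|n IH]; intros u v lam D.
  - inversion D as [w E0 Ew E|]; symmetry in E.
    apply map_eq_app in E as (l1 & l2 & -> & <- & <-).
    exists 0, 0, l1, l2. repeat split; constructor.
  - inversion D as [|? ? x ? Hstep Dx]; subst.
    apply step_app_inv in Hstep as (u' & v' & -> & [[Hu ->] | [-> Hv]]);
      destruct (IH _ _ _ Dx) as (n1 & n2 & l1 & l2 & -> & -> & D1 & D2).
    + exists (S n1), n2, l1, l2. repeat split; [econstructor; eauto | exact D2].
    + exists n1, (S n2), l1, l2. repeat split; [lia | exact D1 | econstructor; eauto].
Qed.

Lemma derivesn_suffix_inv n eta j a (lam : list T) :
  nth_error eta j = Some a ->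
  derivesn P n (skipn j eta) (map Term lam) ->
  exists n1 n2 l1 l2, n = n1 + n2 /\ lam = l1 ++ l2 /\
    derivesn P n1 [a] (map Term l1) /\ derivesn P n2 (skipn (S j) eta) (map Term l2).
Proof. intros Ha. rewrite (skipn_nth_error _ _ _ Ha). exact (derivesn_app_inv n [a] _ lam). Qed.
End Derivations.

Section CallSites.
Context {T N : Type}.

(* The excluded case, the tail [X] of a repetition rule [X -> alpha X], is the
   one where CPSProd does not invoke CPSSym. *)
Definition call_site (ps : list (fprod T N)) m X eta j : Prop :=
  In (X, eta) ps /\ nth_error eta j = Some (NT (Fresh m)) /\
  ~ (S j = length eta /\ Fresh m = X).

Definition sites_between (ps : list (fprod T N)) lo hi : Prop :=
  forall m X eta j, call_site ps m X eta j -> lo <= m < hi.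

Definition unique_sites (ps : list (fprod T N)) : Prop :=
  forall m X1 eta1 j1 X2 eta2 j2,
    call_site ps m X1 eta1 j1 -> call_site ps m X2 eta2 j2 ->
    X1 = X2 /\ eta1 = eta2 /\ j1 = j2.

Lemma call_site_app_inv a b m X eta j :
  call_site (a ++ b) m X eta j -> call_site a m X eta j \/ call_site b m X eta j.
Proof.
  intros (Hin & Hn & Hl). apply in_app_or in Hin as [Hin | Hin]; [left | right];
    repeat split; assumption.
Qed.

Lemma call_site_single X al m Y eta j :
  call_site [(X, al)] m Y eta j ->
  Y = X /\ eta = al /\ nth_error al j = Some (NT (Fresh m)) /\
  ~ (S j = length al /\ Fresh m = X).
Proof. intros ([E | []] & Hn & Hl). injection E as -> ->. auto. Qed.

Lemma call_site_outside ps lo hi m X eta j :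
  sites_between ps lo hi -> m < lo \/ hi <= m -> ~ call_site ps m X eta j.
Proof. intros Hb Hm Hs. specialize (Hb _ _ _ _ Hs). lia. Qed.

Lemma sites_between_nil lo hi : sites_between [] lo hi.
Proof. intros m X eta j ([] & _). Qed.

Lemma unique_sites_nil : unique_sites [].
Proof. intros m X1 eta1 j1 X2 eta2 j2 ([] & _). Qed.

Lemma sites_between_weaken ps lo hi lo' hi' :
  sites_between ps lo hi -> lo' <= lo -> hi <= hi' -> sites_between ps lo' hi'.
Proof. intros Hb ? ? m X eta j Hs. specialize (Hb _ _ _ _ Hs). lia. Qed.

Lemma sites_between_app a b lo hi :
  sites_between a lo hi -> sites_between b lo hi -> sites_between (a ++ b) lo hi.
Proof.
  intros Ha Hb m X eta j Hs. apply call_site_app_inv in Hs as [Hs | Hs]; eauto.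
Qed.

Lemma unique_sites_app a b :
  unique_sites a -> unique_sites b ->
  (forall m X1 eta1 j1 X2 eta2 j2,
     call_site a m X1 eta1 j1 -> ~ call_site b m X2 eta2 j2) ->
  unique_sites (a ++ b).
Proof.
  intros Ha Hb Hdisj m X1 eta1 j1 X2 eta2 j2 S1 S2.
  apply call_site_app_inv in S1 as [S1 | S1];
    apply call_site_app_inv in S2 as [S2 | S2]; eauto;
    exfalso; eapply Hdisj; eassumption.
Qed.

Lemma unique_sites_app_between a b lo hi lo' hi' :
  sites_between a lo hi -> sites_between b lo' hi' -> hi <= lo' \/ hi' <= lo ->
  unique_sites a -> unique_sites b -> unique_sites (a ++ b).
Proof.
  intros Ha Hb Hd Ua Ub. apply unique_sites_app; [exact Ua | exact Ub|].
  intros m X1 eta1 j1 X2 eta2 j2 S1. specialize (Ha _ _ _ _ S1).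
  apply (call_site_outside _ _ _ _ _ _ _ Hb). lia.
Qed.
End CallSites.

Section FlattenSites.
Context {T N : Type}.

(* Named copies of the local fixpoints of [flatten], so that invariants can be
   stated about them. *)
Fixpoint flatten_cat_items (es : list (expr T N)) (k : nat)
  : list (fsym T N) * list (fprod T N) * nat :=
  match es with
  | [] => ([], [], k)
  | e1 :: es' =>
      match e1 with
      | ESym s =>
          let '(al, ps, k') := flatten_cat_items es' k in (liftS s :: al, ps, k')
      | _ =>
          let '(ps1, k1) := flatten (Fresh k) e1 (S k) in
          let '(al, ps, k') := flatten_cat_items es' k1 in
          (NT (Fresh k) :: al, ps1 ++ ps, k')
      end
  end.

Definition flatten_alt_items (X : fnt N) :=
  fix go (es : list (expr T N)) (k : nat) : list (fprod T N) * nat :=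
  match es with
  | [] => ([], k)
  | e1 :: es' =>
      let '(ps1, k1) := flatten X e1 k in
      let '(ps, k') := go es' k1 in (ps1 ++ ps, k')
  end.

Lemma flatten_ECat X es k : flatten X (ECat es) k =
  let '(al, ps, k') := flatten_cat_items es k in (ps ++ [(X, al)], k').
Proof. reflexivity. Qed.

Lemma flatten_EAlt X es k : flatten X (EAlt es) k = flatten_alt_items X es k.
Proof. reflexivity. Qed.

Section ExprNestedInd.
Variable Pe : expr T N -> Prop.
Hypothesis HSym : forall s, Pe (ESym s).
Hypothesis HCat : forall es, Forall Pe es -> Pe (ECat es).
Hypothesis HAlt : forall es, Forall Pe es -> Pe (EAlt es).
Hypothesis HOpt : forall e, Pe e -> Pe (EOpt e).
Hypothesis HStar : forall e, Pe e -> Pe (EStar e).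

Fixpoint expr_nested_ind (e : expr T N) : Pe e :=
  let fix all (l : list (expr T N)) : Forall Pe l :=
    match l with
    | [] => Forall_nil _
    | x :: l' => Forall_cons _ (expr_nested_ind x) (all l')
    end in
  match e with
  | ESym s => HSym s
  | ECat es => HCat es (all es)
  | EAlt es => HAlt es (all es)
  | EOpt e => HOpt e (expr_nested_ind e)
  | EStar e => HStar e (expr_nested_ind e)
  end.
End ExprNestedInd.

Definition fresh_ok (r : list (fprod T N) * nat) k : Prop :=
  let '(ps, k') := r in k <= k' /\ sites_between ps k k' /\ unique_sites ps.

Definition cat_items_ok (r : list (fsym T N) * list (fprod T N) * nat) k : Prop :=
  let '(al, ps, k') := r in
  fresh_ok (ps, k') k /\
  forall i m, nth_error al i = Some (NT (Fresh m)) ->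
    k <= m < k' /\ (forall X eta j, ~ call_site ps m X eta j) /\
    forall i', nth_error al i' = Some (NT (Fresh m)) -> i' = i.

Lemma liftS_not_fresh (s : sym T N) m : liftS s <> NT (Fresh m).
Proof. destruct s; discriminate. Qed.

Lemma cat_items_ok_nil k : cat_items_ok ([], [], k) k.
Proof.
  split; [split; [lia | split; [apply sites_between_nil | apply unique_sites_nil]]|].
  intros [|i] m H; discriminate.
Qed.

Lemma cat_items_ok_sym s al ps k k' :
  cat_items_ok (al, ps, k') k -> cat_items_ok (liftS s :: al, ps, k') k.
Proof.
  intros [Hok Hal]. split; [exact Hok|].
  intros [|i] m Hi; [destruct (liftS_not_fresh s m); now injection Hi|].
  destruct (Hal _ _ Hi) as (Hm & Hnot & Hone). split; [exact Hm|]. split; [exact Hnot|].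
  intros [|i'] Hi'; [destruct (liftS_not_fresh s m); now injection Hi'|].
  f_equal. exact (Hone _ Hi').
Qed.

Lemma cat_items_ok_fresh al ps1 ps k k1 k' :
  fresh_ok (ps1, k1) (S k) -> cat_items_ok (al, ps, k') k1 ->
  cat_items_ok (NT (Fresh k) :: al, ps1 ++ ps, k') k.
Proof.
  intros (Hk1 & Hb1 & Hu1) ((Hk' & Hb & Hu) & Hal).
  split; [split; [lia | split]|].
  - apply sites_between_app; eapply sites_between_weaken; eauto; lia.
  - eapply unique_sites_app_between; eauto.
  - intros [|i] m Hi; simpl in Hi.
    + injection Hi as <-. split; [lia|]. split.
      * intros X eta j [Hs | Hs]%call_site_app_inv;
          [apply (call_site_outside _ _ _ _ _ _ _ Hb1) in Hs
          | apply (call_site_outside _ _ _ _ _ _ _ Hb) in Hs]; auto; lia.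
      * intros [|i'] Hi'; [reflexivity|]. destruct (Hal _ _ Hi'). lia.
    + destruct (Hal _ _ Hi) as (Hm & Hnotps & Hone). split; [lia|]. split.
      * intros X eta j Hs. apply call_site_app_inv in Hs as [Hs | Hs].
        -- exact (call_site_outside _ _ _ _ _ _ _ Hb1 (or_intror (proj1 Hm)) Hs).
        -- exact (Hnotps _ _ _ Hs).
      * intros [|i'] Hi'; simpl in Hi'; [injection Hi' as <-; lia|].
        f_equal. exact (Hone _ Hi').
Qed.

Lemma fresh_ok_app_siteless ps b k k' :
  fresh_ok (ps, k') k -> (forall m X eta j, ~ call_site b m X eta j) ->
  fresh_ok (ps ++ b, k') k.
Proof.
  intros (Hk & Hb & Hu) Hnone.
  assert (Hps : forall m X eta j, call_site (ps ++ b) m X eta j -> call_site ps m X eta j).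
  { intros m X eta j Hs. apply call_site_app_inv in Hs as [Hs | Hs]; [exact Hs|].
    destruct (Hnone _ _ _ _ Hs). }
  split; [exact Hk | split].
  - intros m X eta j Hs. exact (Hb _ _ _ _ (Hps _ _ _ _ Hs)).
  - intros m X1 eta1 j1 X2 eta2 j2 S1 S2. exact (Hu _ _ _ _ _ _ _ (Hps _ _ _ _ S1) (Hps _ _ _ _ S2)).
Qed.

Lemma star_call_site (X : fnt N) k m Y eta j :
  call_site (T := T) [(X, [NT (Fresh k); NT X]); (X, [])] m Y eta j ->
  m = k /\ Y = X /\ eta = [NT (Fresh k); NT X] /\ j = 0.
Proof.
  intros ([E | [E | []]] & Hn & Hl); injection E as <- <-.
  - destruct j as [|[|j]]; simpl in Hn.
    + now injection Hn as ->.
    + injection Hn as ->. exfalso. now apply Hl.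
    + destruct j; discriminate.
  - destruct j; discriminate.
Qed.

Lemma flatten_cat_items_ok es :
  Forall (fun e => forall X k, fresh_ok (flatten X e k) k) es ->
  forall k, cat_items_ok (flatten_cat_items es k) k.
Proof.
  induction 1 as [|e1 es He1 Hes IH]; intros k; [apply cat_items_ok_nil|].
  destruct e1 as [s | | | |]; cbn [flatten_cat_items].
  { specialize (IH k). destruct (flatten_cat_items es k) as [[al ps] k'].
    now apply cat_items_ok_sym. }
  all: specialize (He1 (Fresh k) (S k)); destruct (flatten _ _ (S k)) as [ps1 k1];
    specialize (IH k1); destruct (flatten_cat_items es k1) as [[al ps] k'];
    eapply cat_items_ok_fresh; eassumption.
Qed.

Lemma flatten_alt_items_ok X es :
  Forall (fun e => forall X k, fresh_ok (flatten X e k) k) es ->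
  forall k, fresh_ok (flatten_alt_items X es k) k.
Proof.
  induction 1 as [|e1 es He1 Hes IH]; intros k.
  - split; [lia | split; [apply sites_between_nil | apply unique_sites_nil]].
  - cbn [flatten_alt_items]. specialize (He1 X k).
    destruct (flatten X e1 k) as [ps1 k1]. destruct He1 as (Hk1 & Hb1 & Hu1).
    specialize (IH k1). destruct (flatten_alt_items X es k1) as [ps k'].
    destruct IH as (Hk' & Hb & Hu).
    split; [lia | split].
    + apply sites_between_app; eapply sites_between_weaken; eauto; lia.
    + eapply unique_sites_app_between; eauto.
Qed.

Lemma flatten_fresh_ok e : forall X k, fresh_ok (flatten X e k) k.
Proof.
  induction e as [s | es Hes | es Hes | e IH | e IH] using expr_nested_ind; intros X k.
  - apply (fresh_ok_app_siteless [] _ k k); [split; [lia | split]|].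
    + apply sites_between_nil.
    + apply unique_sites_nil.
    + intros m Y eta j (_ & _ & Hn & _)%call_site_single.
      destruct j as [|[]]; try discriminate.
      apply (liftS_not_fresh s m). now injection Hn.
  - rewrite flatten_ECat.
    pose proof (flatten_cat_items_ok es Hes k) as Hcat.
    destruct (flatten_cat_items es k) as [[al ps] k'].
    destruct Hcat as ((Hk' & Hb & Hu) & Hal).
    split; [exact Hk' | split].
    + apply sites_between_app; [exact Hb|].
      intros m Y eta j (_ & _ & Hn & _)%call_site_single. exact (proj1 (Hal _ _ Hn)).
    + apply unique_sites_app; [exact Hu | |].
      * intros m Y1 eta1 j1 Y2 eta2 j2
          (-> & -> & Hn1 & _)%call_site_single (-> & -> & Hn2 & _)%call_site_single.
        repeat split. symmetry. exact (proj2 (proj2 (Hal _ _ Hn1)) _ Hn2).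
      * intros m Y1 eta1 j1 Y2 eta2 j2 S1 (_ & _ & Hn2 & _)%call_site_single.
        exact (proj1 (proj2 (Hal _ _ Hn2)) _ _ _ S1).
  - rewrite flatten_EAlt. now apply flatten_alt_items_ok.
  - cbn [flatten]. specialize (IH X k). destruct (flatten X e k) as [ps k'].
    apply fresh_ok_app_siteless; [exact IH|].
    intros m Y eta j (_ & _ & Hn & _)%call_site_single. destruct j; discriminate.
  - cbn [flatten]. specialize (IH (Fresh k) (S k)).
    destruct (flatten (Fresh k) e (S k)) as [ps k']. destruct IH as (Hk' & Hb & Hu).
    assert (Hstar : sites_between (T := T) [(X, [NT (Fresh k); NT X]); (X, [])] k (S k)).
    { intros m Y eta j (-> & _)%star_call_site. lia. }
    split; [lia | split].
    + apply sites_between_app; eapply sites_between_weaken; eauto; lia.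
    + eapply unique_sites_app_between; [exact Hb | exact Hstar | lia | exact Hu |].
      intros m Y1 eta1 j1 Y2 eta2 j2
        (-> & -> & -> & ->)%star_call_site (_ & -> & -> & ->)%star_call_site.
      auto.
Qed.

Lemma flatten_rules_sites (rs : list (N * expr T N)) k :
  (forall m X eta j, call_site (flatten_rules rs k) m X eta j -> k <= m) /\
  unique_sites (flatten_rules rs k).
Proof.
  revert k. induction rs as [|[x e] rs IH]; intros k; cbn [flatten_rules].
  - split; [intros m X eta j ([] & _) | apply unique_sites_nil].
  - pose proof (flatten_fresh_ok e (Top x) k) as Hok.
    destruct (flatten (Top x) e k) as [ps k']. destruct Hok as (Hk' & Hb & Hu).
    destruct (IH k') as [Hlo Hrest]. split.
    + intros m X eta j [Hs | Hs]%call_site_app_inv;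
        [specialize (Hb _ _ _ _ Hs) | specialize (Hlo _ _ _ _ Hs)]; lia.
    + apply unique_sites_app; [exact Hu | exact Hrest|].
      intros m X1 eta1 j1 X2 eta2 j2 S1 S2.
      specialize (Hb _ _ _ _ S1). specialize (Hlo _ _ _ _ S2). lia.
Qed.

Lemma flatG_unique_sites (rules : list (N * expr T N)) : unique_sites (flatG rules).
Proof. exact (proj2 (flatten_rules_sites rules 0)). Qed.
End FlattenSites.

Scheme SymCall_mutind := Induction for SymCall Sort Prop
  with ProdCall_mutind := Induction for ProdCall Sort Prop.
Combined Scheme SymCall_ProdCall_mutind from SymCall_mutind, ProdCall_mutind.

Section CPS.
Context {T N : Type} (G : list (fprod T N)) (trig : nat -> bool).

Lemma ProdCall_in X eta j tau :
  ProdCall G trig X eta j tau -> In (X, eta) G /\ j <= length eta.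
Proof. induction 1; intuition lia. Qed.

Lemma triggered_call_site X Y eta j tau :
  ProdCall G trig X eta (S j) tau -> nth_error eta j = Some (NT Y) ->
  isTrig (T := T) trig (NT Y) = true -> ~ (S j = length eta /\ Y = X) ->
  exists m, Y = Fresh m /\ call_site G m X eta j.
Proof.
  intros HP Hn Ht Hl. destruct Y as [y | m]; [discriminate|].
  exists m. split; [reflexivity|]. split; [exact (proj1 (ProdCall_in _ _ _ _ HP))|].
  split; [exact Hn | exact Hl].
Qed.

Lemma ProdCall_pred X eta j tau :
  ProdCall G trig X eta (S j) tau -> exists tau', ProdCall G trig X eta j tau'.
Proof.
  intros HP. destruct (ProdCall_in _ _ _ _ HP) as [_ Hj].
  destruct (nth_error eta j) as [a|] eqn:Ha; [|apply nth_error_None in Ha; lia].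
  destruct (isTrig trig a) eqn:Htrig; [|eexists; eapply pc_nontrig; eassumption].
  destruct a as [t | Y]; [discriminate|].
  (* Equality of nonterminals is not decidable for an arbitrary type [N]. *)
  destruct (classic (S j = length eta /\ Y = X)) as [[Hlen ->] | Hl].
  - eexists; eapply pc_loop; eassumption.
  - eexists; eapply pc_trig; eassumption.
Qed.

Lemma ProdCall_start X eta tau :
  SymCall G trig X tau -> In (X, eta) G -> exists tau0, ProdCall G trig X eta 0 tau0.
Proof.
  intros HS Hin.
  enough (H : forall d, d <= length eta -> exists t, ProdCall G trig X eta (length eta - d) t).
  { destruct (H (length eta) (le_n _)) as [t Ht]. rewrite Nat.sub_diag in Ht. eauto. }
  induction d as [|d IH]; intros Hd.
  - rewrite Nat.sub_0_r. eexists. apply pc_start; eassumption.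
  - destruct (IH ltac:(lia)) as [t Ht].
    replace (length eta - d) with (S (length eta - S d)) in Ht by lia.
    exact (ProdCall_pred _ _ _ _ Ht).
Qed.

Lemma TauX_nontrig X eta j a :
  In (X, eta) G -> nth_error eta j = Some a -> isTrig trig a = false -> TauX G trig a [].
Proof.
  intros Hin Ha Htrig. destruct a as [t | Y]; [reflexivity|].
  apply sc_init; [|exact Htrig].
  exists (X, eta). split; [exact Hin|]. right. exact (nth_error_In _ _ Ha).
Qed.

Section Simulation.
Hypothesis HG : unique_sites G.

(* By induction on the first invocation: a triggered CPSSym(Y, .) comes from
   the unique call site of Y, and two invocations of CPSProd at the same dotted
   production read the same symbol, hence were made by the same rule. *)
Lemma cps_args_unique :
  (forall X tau1, SymCall G trig X tau1 ->
     forall tau2, SymCall G trig X tau2 -> tau1 = tau2) /\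
  (forall X eta j tau1, ProdCall G trig X eta j tau1 ->
     forall tau2, ProdCall G trig X eta j tau2 -> tau1 = tau2).
Proof.
  apply SymCall_ProdCall_mutind.
  { intros X _ Htrig tau2 H2. inversion H2; subst; congruence. }
  { intros X Y eta j tau HP IH Hn Htrig Hl tau2 H2.
    inversion H2 as [|X' Y' eta' j' tau' HP' Hn' Htrig' Hl']; subst; [congruence|].
    destruct (triggered_call_site _ _ _ _ _ HP Hn Htrig Hl) as (m & -> & S1).
    destruct (triggered_call_site _ _ _ _ _ HP' Hn' Htrig' Hl') as (m' & [= <-] & S2).
    destruct (HG _ _ _ _ _ _ _ S1 S2) as (<- & <- & <-).
    exact (IH _ HP'). }
  all: intros; match goal with H : ProdCall _ _ _ _ _ _ |- _ => inversion H; subst end;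
    repeat match goal with
    | E1 : nth_error ?l ?i = Some _, E2 : nth_error ?l ?i = Some _ |- _ =>
        rewrite E1 in E2; injection E2 as E2; subst
    | E : nth_error ?l (length ?l) = Some _ |- _ => apply nth_error_lt in E; lia
    end; try congruence; try tauto.
  all: try f_equal; auto.
Qed.

Lemma SymCall_unique X tau1 tau2 :
  SymCall G trig X tau1 -> SymCall G trig X tau2 -> tau1 = tau2.
Proof. intros H1. exact (proj1 cps_args_unique X tau1 H1 tau2). Qed.

Definition sym_sim n : Prop :=
  forall s tau lam, TauX G trig s tau ->
    derivesn (prods_of G) n [s] (map Term lam) ->
    derivesn (cpsG G trig) n [hat s] (map Term lam ++ tau).

Definition prod_sim n : Prop :=
  forall X eta j tauPi tauX lam,
    ProdCall G trig X eta j tauPi -> SymCall G trig X tauX ->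
    derivesn (prods_of G) n (skipn j eta) (map Term lam) ->
    derivesn (cpsG G trig) n tauPi (map Term lam ++ tauX).

Lemma prod_sim_of_sym_sim n :
  (forall m, m <= n -> sym_sim m) ->
  forall X eta j tauPi, ProdCall G trig X eta j tauPi ->
  forall tauX lam m, m <= n -> SymCall G trig X tauX ->
    derivesn (prods_of G) m (skipn j eta) (map Term lam) ->
    derivesn (cpsG G trig) m tauPi (map Term lam ++ tauX).
Proof.
  intros Hsym X eta j tauPi HP.
  induction HP as [X eta tau HS0 Hin | X eta j tau a HP IH Ha Htrig
                  | X eta j tau HP IH Ha Htrig Hlen | X Y eta j tau HP IH Ha Htrig Hl];
    intros tauX lam m Hm HS D.
  - rewrite skipn_all in D. apply derivesn_nil_inv in D as [-> ->].
    rewrite (SymCall_unique _ _ _ HS0 HS). constructor.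
  - apply (derivesn_suffix_inv _ _ _ _ _ _ Ha) in D as (m1 & m2 & l1 & l2 & -> & -> & D1 & D2).
    destruct (ProdCall_in _ _ _ _ HP) as [Hin _].
    pose proof (Hsym m1 ltac:(lia) a [] l1 (TauX_nontrig _ _ _ _ Hin Ha Htrig) D1) as C1.
    rewrite app_nil_r in C1. apply (derivesn_app_r _ _ _ _ tau) in C1.
    rewrite map_app, <- app_assoc.
    eapply derivesn_seq; [exact C1 | apply IH; [lia | exact HS | exact D2]].
  - apply (derivesn_suffix_inv _ _ _ _ _ _ Ha) in D as (m1 & m2 & l1 & l2 & -> & -> & D1 & D2).
    rewrite Hlen, skipn_all in D2. apply derivesn_nil_inv in D2 as [-> ->].
    rewrite Nat.add_0_r, app_nil_r. exact (Hsym m1 ltac:(lia) (NT X) tauX l1 HS D1).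
  - apply (derivesn_suffix_inv _ _ _ _ _ _ Ha) in D as (m1 & m2 & l1 & l2 & -> & -> & D1 & D2).
    pose proof (Hsym m1 ltac:(lia) (NT Y) tau l1 (sc_call HP Ha Htrig Hl) D1) as C1.
    rewrite map_app, <- app_assoc.
    eapply derivesn_seq; [exact C1 | apply IH; [lia | exact HS | exact D2]].
Qed.

Lemma sym_sim_of_prod_sim n : (forall m, m < n -> prod_sim m) -> sym_sim n.
Proof.
  intros Hprod [t | Y] tau lam HT D; simpl in HT |- *.
  - subst tau. apply (derivesn_terminals _ _ [t]) in D as [-> E].
    destruct lam as [|x []]; try discriminate. injection E as ->. constructor.
  - apply derivesn_NT_inv in D as (n' & beta & -> & Hin & D).
    destruct (ProdCall_start _ _ _ HT Hin) as [tau0 H0].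
    apply derivesn_NT with tau0; [exists beta; exact H0|].
    exact (Hprod n' (Nat.lt_succ_diag_r n') _ _ _ _ _ _ H0 HT D).
Qed.

Lemma cps_simulation n : sym_sim n /\ prod_sim n.
Proof.
  induction n as [n IH] using lt_wf_ind.
  assert (Hsym : sym_sim n) by (apply sym_sim_of_prod_sim; intros m Hm; apply IH, Hm).
  split; [exact Hsym|].
  intros X eta j tauPi tauX lam HP HS D.
  refine (prod_sim_of_sym_sim n _ _ _ _ _ HP _ _ _ (le_n n) HS D).
  intros m Hm. destruct (Nat.eq_dec m n) as [-> | Hne]; [exact Hsym|].
  apply IH. lia.
Qed.
End Simulation.
End CPS.

Theorem mainTheorem1 (T N : Type) (rules : list (N * expr T N)) (trig : nat -> bool) :
  let G := flatG rules in
  (forall (s : fsym T N) (tau : list (hsym T N)) (lam : list T) (n : nat),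
      sym_of G s -> TauX G trig s tau ->
      derivesn (prods_of G) n [s] (map Term lam) ->
      derivesn (cpsG G trig) n [hat s] (map Term lam ++ tau))
  /\
  (forall (X : fnt N) (eta : list (fsym T N)) (j : nat)
          (tauPi tauX : list (hsym T N)) (lam : list T) (n : nat),
      In (X, eta) G -> j <= length eta ->
      ProdCall G trig X eta j tauPi -> SymCall G trig X tauX ->
      derivesn (prods_of G) n (skipn j eta) (map Term lam) ->
      derivesn (cpsG G trig) n tauPi (map Term lam ++ tauX)).
Proof.
  intros G.
  pose proof (cps_simulation G trig (flatG_unique_sites rules)) as Hsim.
  split.
  - intros s tau lam n _. exact (proj1 (Hsim n) s tau lam).
  - intros X eta j tauPi tauX lam n _ _. exact (proj2 (Hsim n) X eta j tauPi tauX lam).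
Qed.
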